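(* Let $T$ be a constant invertible complex $N\times N$ matrix with $T^\ast=T^\intercal=T^{-1}$. Let $C,K,L$ be constant complex $N\times N$ matrices with $K^\intercal=K$, and $V\in\mathbb{C}^N$, such that $C^\ast=TCT^{-1}$, $K^\ast=TKT^{-1}$, $L^\ast=TLT^{-1}$, $V^\ast=TV$. Write $\tilde\xi(\mathbf{t}_o,L)=\sum_{n\ge0}t_{2n+1}L^{2n+1}$ and $\tilde\xi'(\mathbf{t}_o,L)=\sum_{n\ge0}(2n+1)t_{2n+1}L^{2n}$ for real $\mathbf{t}_o=(t_1,t_3,t_5,\ldots)$. Then each of the following functions $\tau$ is real: (a) (case 1, CKP) if $L^\intercal K+KL=-VV^\intercal$ and $C^\intercal=C$: $\tau=\det\big(C-e^{\tilde\xi(\mathbf{t}_o,L^\intercal)}Ke^{\tilde\xi(\mathbf{t}_o,L)}\big)$; (b) (case 1, BKP) if $L^\intercal K+KL=-VV^\intercal$ and $C^\intercal=-C$: $\tau=\det\big(C-e^{\tilde\xi(\mathbf{t}_o,L^\intercal)}(L^\intercal K-KL)e^{\tilde\xi(\mathbf{t}_o,L)}\big)$; (c) (case 2, CKP) if $L^\intercal=-L$, $I_N+[L,K]=VV^\intercal$ and $C^\intercal=C$: $\tau=\det\big(e^{\tilde\xi(\mathbf{t}_o,L)}Ce^{-\tilde\xi(\mathbf{t}_o,L)}+\tilde\xi'(\mathbf{t}_o,L)-K\big)$; (d) (case 2, BKP) if $L^\intercal=-L$, $I_N+[L,K]=VV^\intercal$ and $C^\intercal=-C$: $\tau=\det\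big(e^{\tilde\xi(\mathbf{t}_o,L)}Ce^{-\tilde\xi(\mathbf{t}_o,L)}-(KL+LK)+2L\,\tilde\xi'(\mathbf{t}_o,L)\big)$.
   Context: $X^\ast$ denotes the entrywise complex conjugate of $X$ and $X^\intercal$ its transpose; $[L,K]=LK-KL$. These $\tau$-functions determine, via $\phi=(\ln\tau)_{t_1}$, solutions of the BKP and CKP hierarchies constructed from a matrix Riccati hierarchy. *)

From HB Require Import structures.
From mathcomp Require Import all_boot all_order all_algebra.
From mathcomp Require Import complex.
From mathcomp Require Import all_classical all_reals all_analysis.
Set Implicit Arguments. Unset Strict Implicit. Unset Printing Implicit Defensive.
Import Order.TTheory GRing.Theory Num.Theory ComplexField.
Local Open Scope classical_set_scope.
Local Open Scope ring_scope.

Definition mxconj (F : numClosedFieldType) (m n : nat) (X : 'M[F]_(m, n)) : 'M[F]_(m, n) :=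
  map_mx Num.conj X.

Definition expm (R : realType) (N : nat) (A : 'M[R[i]]_N) : 'M[R[i]]_N :=
  lim (series (fun k : nat => (k`!%:R)^-1 *: A ^+ k) @ \oo).

(* Odd times t_o = (t_1, t_3, t_5, ...) given (finitely supported) as a
   sequence t with t`_n = t_{2n+1}. *)
Definition xit (R : realType) (N : nat) (t : seq R) (L : 'M[R[i]]_N) : 'M[R[i]]_N :=
  \sum_(n < size t) ((t`_n)%:C)%C *: L ^+ (2 * n + 1)%N.

Definition xit' (R : realType) (N : nat) (t : seq R) (L : 'M[R[i]]_N) : 'M[R[i]]_N :=
  \sum_(n < size t) ((2 * n + 1)%N%:R * ((t`_n)%:C)%C) *: L ^+ (2 * n)%N.

From HB Require Import structures.
From mathcomp Require Import all_boot all_order all_algebra.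
From mathcomp Require Import complex.
From mathcomp Require Import all_classical all_reals all_analysis.
From mathcomp Require Import ring.
Set Implicit Arguments. Unset Strict Implicit. Unset Printing Implicit Defensive.
Import Order.TTheory GRing.Theory Num.Theory ComplexField.
Local Open Scope ring_scope.

(* The hypotheses on C, K and L say that they are fixed points of the
   antilinear map X |-> T^-1 X^* T, which is an involution because
   T^* = T^T = T^-1.  Its fixed points form a real algebra closed under
   transposition and, by continuity of the involution, under the matrix
   exponential; so each argument X of det is fixed, and
   det X = det (T^-1 X^* T) = (det X)^* is real. *)

Lemma klipschitz_continuous (K : numFieldType) (V W : normedModType K) (k : K)
    (f : V -> W) :
  0 < k -> k.-lipschitz f -> continuous f.
Proof.
move=> k_gt0 f_lip x; apply/cvgrPdist_lt => e e_gt0; near=> z.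
have /= fxz_le := f_lip (x, z) (conj I I).
apply: le_lt_trans fxz_le _.
rewrite mulrC -ltr_pdivlMr//; near: z.
by apply: cvgr_dist_lt; rewrite // divr_gt0.
Unshelve. all: by end_near. Qed.

Section LimitInvolution.
Local Open Scope classical_set_scope.

Lemma lim_comp_continuous_involution {U : Type} {T : ptopologicalType}
    (F : set_system U) {FF : ProperFilter F} (f : T -> T) (s : U -> T) :
  hausdorff_space T -> continuous f -> involutive f -> f point = point ->
  lim ((f \o s) @ F) = f (lim (s @ F)).
Proof.
move=> T_sep f_cont fK f_point.
have cvg_f (u : U -> T) : cvg (u @ F) -> (f \o u) @ F --> f (lim (u @ F)).
  by move=> u_cvg; apply: cvg_comp u_cvg (f_cont _).
have [s_cvg|s_dvg] := pselect (cvg (s @ F)).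
  exact/(cvg_lim T_sep)/cvg_f.
(* A divergent limit is the default [point], which [f] fixes. *)
have fs_dvg : ~ cvg ((f \o s) @ F).
  move=> /cvg_f fs_cvg; apply: s_dvg.
  rewrite (_ : f \o (f \o s) = s) in fs_cvg; first exact: cvgP fs_cvg.
  by apply/funext => u /=.
by rewrite (dvgP s_dvg) (dvgP fs_dvg).
Qed.

End LimitInvolution.

Section MatrixMaxNorm.
Variable K : numFieldType.

Lemma ler_mxentry_norm (m n : nat) (x : 'M[K]_(m, n)) i j : `|x i j| <= `|x|.
Proof.
rewrite [`|x|]/Num.norm /= mx_normE -num_abs_le//.
apply/bigmax_geP; right => /=; exists (i, j) => //.
by rewrite -num_le /= normr_id.
Qed.

Lemma mx_norm_le (m n : nat) (x : 'M[K]_(m, n)) (c : K) :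
  0 <= c -> (forall i j, `|x i j| <= c) -> `|x| <= c.
Proof.
move=> c_ge0 x_le; rewrite [`|x|]/Num.norm /= mx_normE.
have -> : c = (NngNum c_ge0)%:num by [].
by rewrite num_le; apply/bigmax_leP; split => // ij _; rewrite -num_le /=.
Qed.

Lemma mx_norm_mulmx_le (m n p : nat) (A : 'M[K]_(m, n)) (B : 'M[K]_(n, p)) :
  `|A *m B| <= n%:R * (`|A| * `|B|).
Proof.
apply: mx_norm_le => [|i j]; first by rewrite !mulr_ge0.
rewrite mxE; apply: le_trans (ler_norm_sum _ _ _) _.
apply: le_trans (ler_sum _ (G := fun _ => `|A| * `|B|) _) _.
  by move=> k _; rewrite normrM ler_pM // ler_mxentry_norm.
by rewrite sumr_const card_ord mulr_natl.
Qed.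

End MatrixMaxNorm.

Lemma mx_norm_conj (C : numClosedFieldType) (m n : nat) (x : 'M[C]_(m, n)) :
  `|mxconj x| = `|x|.
Proof.
rewrite /Num.norm /= !mx_normE; congr (_%:num).
by apply: eq_bigr => ij _; apply: val_inj => /=; rewrite mxE norm_conjC.
Qed.

Lemma conjC_realC (R : rcfType) (r : R) : ((r%:C)%C)^* = (r%:C)%C.
Proof. exact: conjc_real. Qed.

Section TwistedConjugation.
Variables (R : realType) (n : nat) (T : 'M[R[i]]_n).
Hypothesis T_unit : T \in unitmx.
Local Notation mxC := ('M[R[i]]_n : normedModType R[i]).

(* The reality condition [X^* = T X T^-1] says that [X] is a fixed point of [tconj]. *)
Definition tconj (X : 'M[R[i]]_n) : 'M[R[i]]_n := invmx T *m mxconj X *m T.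

Lemma tconj0 : tconj 0 = 0.
Proof. by rewrite /tconj /mxconj map_mx0 mulmx0 mul0mx. Qed.

Lemma tconjD : {morph tconj : X Y / X + Y}.
Proof. by move=> X Y; rewrite /tconj /mxconj map_mxD mulmxDr mulmxDl. Qed.

Lemma tconjN : {morph tconj : X / - X}.
Proof. by move=> X; rewrite /tconj /mxconj map_mxN mulmxN mulNmx. Qed.

Lemma tconj_sum (I : Type) (r : seq I) (P : pred I) (F : I -> 'M[R[i]]_n) :
  tconj (\sum_(i <- r | P i) F i) = \sum_(i <- r | P i) tconj (F i).
Proof. exact: (big_morph tconj tconjD tconj0). Qed.

Lemma tconjZ (a : R[i]) X : a^* = a -> tconj (a *: X) = a *: tconj X.
Proof.
by move=> a_real; rewrite /tconj /mxconj map_mxZ /= a_real -scalemxAr -scalemxAl.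
Qed.

Lemma tconj1 : tconj 1%:M = 1%:M.
Proof. by rewrite /tconj /mxconj map_mx1 mulmx1 mulVmx. Qed.

Lemma tconjM : {morph tconj : X Y / X *m Y}.
Proof. by move=> X Y; rewrite /tconj /mxconj map_mxM !mulmxA mulmxK. Qed.

Lemma tconjX X k : tconj (X ^+ k) = tconj X ^+ k.
Proof.
elim: k => [|k IHk]; first by rewrite !expr0 tconj1.
by rewrite !exprS -!mulmxE tconjM IHk.
Qed.

Lemma det_tconj X : \det (tconj X) = (\det X)^*.
Proof.
by rewrite /tconj /mxconj !det_mulmx det_inv det_map_mx mulrC mulrA mulrV ?mul1r.
Qed.

Lemma tconj_continuous : continuous (tconj : mxC -> mxC).
Proof.
pose k := n%:R * (n%:R * (`|invmx T| * `|T|)) + 1.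
have k_gt0 : 0 < k by rewrite ltr_wpDl // !mulr_ge0.
apply: (klipschitz_continuous k_gt0) => -[X Y] _ /=.
rewrite -tconjN -tconjD /tconj.
apply: le_trans (mx_norm_mulmx_le _ _) _.
apply: (@le_trans _ _ (n%:R * (n%:R * (`|invmx T| * `|X - Y|) * `|T|))).
  by rewrite ler_wpM2l // ler_wpM2r // -(mx_norm_conj (X - Y)) mx_norm_mulmx_le.
have -> : n%:R * (n%:R * (`|invmx T| * `|X - Y|) * `|T|) = (k - 1) * `|X - Y|.
  by rewrite /k addrK; ring.
by rewrite ler_wpM2r // lerBlDr lerDl.
Qed.

Definition tconj_fixed X := tconj X = X.

Lemma tconj_fixed_of_conj X : mxconj X = T *m X *m invmx T -> tconj_fixed X.
Proof.
by rewrite /tconj_fixed /tconj => ->; rewrite !mulmxA mulVmx // mul1mx mulmxKV.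
Qed.

Lemma det_real_of_tconj_fixed X : tconj_fixed X -> \det X \is Num.real.
Proof. by move=> X_fixed; apply/CrealP; rewrite -det_tconj X_fixed. Qed.

Lemma tconj_fixedD X Y : tconj_fixed X -> tconj_fixed Y -> tconj_fixed (X + Y).
Proof. by rewrite /tconj_fixed tconjD => -> ->. Qed.

Lemma tconj_fixedN X : tconj_fixed X -> tconj_fixed (- X).
Proof. by rewrite /tconj_fixed tconjN => ->. Qed.

Lemma tconj_fixedM X Y : tconj_fixed X -> tconj_fixed Y -> tconj_fixed (X *m Y).
Proof. by rewrite /tconj_fixed tconjM => -> ->. Qed.

Lemma tconj_fixedZ (a : R[i]) X : a^* = a -> tconj_fixed X -> tconj_fixed (a *: X).
Proof. by rewrite /tconj_fixed => a_real; rewrite tconjZ // => ->. Qed.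

Lemma tconj_fixed_xit (t : seq R) X : tconj_fixed X -> tconj_fixed (xit t X).
Proof.
rewrite /tconj_fixed /xit tconj_sum => X_fixed; apply: eq_bigr => j _.
by rewrite tconjZ ?tconjX ?X_fixed // conjC_realC.
Qed.

Lemma tconj_fixed_xit' (t : seq R) X : tconj_fixed X -> tconj_fixed (xit' t X).
Proof.
rewrite /tconj_fixed /xit' tconj_sum => X_fixed; apply: eq_bigr => j _.
rewrite tconjZ ?tconjX ?X_fixed // rmorphM rmorph_nat.
by congr (_ * _); apply: conjC_realC.
Qed.

Hypotheses (T_conj : mxconj T = T^T) (T_orth : T^T = invmx T).

Lemma tconjK : involutive tconj.
Proof.
move=> X; rewrite /tconj /mxconj !map_mxM map_invmx map_mxCK -/(mxconj T) T_conj.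
by rewrite T_orth invmxK !mulmxA mulVmx // mul1mx mulmxKV.
Qed.

Lemma tconj_fixed_tr X : tconj_fixed X -> tconj_fixed X^T.
Proof.
rewrite /tconj_fixed /tconj /mxconj => {2}<-.
by rewrite !trmx_mul trmx_inv T_orth invmxK map_trmx mulmxA.
Qed.

Lemma tconj_expm A : tconj (expm A) = expm (tconj A).
Proof.
have tconj_point : tconj (@point mxC) = @point mxC.
  rewrite (_ : point = 0) ?tconj0 //.
  by apply/matrixP => i j; rewrite !mxE.
rewrite /expm -(@lim_comp_continuous_involution _ mxC _ _ tconj _
  (@norm_hausdorff _ mxC) tconj_continuous tconjK tconj_point).
rewrite (_ : tconj \o _ = series (fun k => k`!%:R^-1 *: tconj A ^+ k)) //.
apply/funext => k /=; rewrite /series /= tconj_sum; apply: eq_bigr => j _.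
by rewrite tconjZ ?tconjX // fmorphV rmorph_nat.
Qed.

Lemma tconj_fixed_expm A : tconj_fixed A -> tconj_fixed (expm A).
Proof. by rewrite /tconj_fixed tconj_expm => ->. Qed.

End TwistedConjugation.

(* Fixedness is derived by applying the closure lemmas, not by rewriting with
   [tconj_expm]: rewriting compares distinct matrix exponentials up to
   conversion, which does not terminate in practice. *)
Create HintDb tconj_fixed discriminated.
#[local] Hint Resolve tconj_fixedD tconj_fixedN tconj_fixedM tconj_fixedZ
  tconj_fixed_xit tconj_fixed_xit' tconj_fixed_tr tconj_fixed_expm conjC_nat
  : tconj_fixed.

Theorem propositionC4 (R : realType) (N : nat)
    (T C K L : 'M[R[i]]_N) (V : 'cV[R[i]]_N) :
  T \in unitmx ->
  mxconj T = (T^T) -> (T^T) = invmx T ->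
  (K^T) = K ->
  mxconj C = T *m C *m invmx T ->
  mxconj K = T *m K *m invmx T ->
  mxconj L = T *m L *m invmx T ->
  mxconj V = T *m V ->
  (* (a) case 1, CKP *)
  ((L^T) *m K + K *m L = - (V *m V^T) -> (C^T) = C ->
     forall t : seq R,
       \det (C - expm (xit t (L^T)) *m K *m expm (xit t L)) \is Num.real) /\
  (* (b) case 1, BKP *)
  ((L^T) *m K + K *m L = - (V *m V^T) -> (C^T) = - C ->
     forall t : seq R,
       \det (C - expm (xit t (L^T)) *m ((L^T) *m K - K *m L) *m expm (xit t L))
         \is Num.real) /\
  (* (c) case 2, CKP *)
  ((L^T) = - L -> 1%:M + (L *m K - K *m L) = V *m V^T -> (C^T) = C ->
     forall t : seq R,
       \det (expm (xit t L) *m C *m expm (- xit t L) + xit' t L - K)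
         \is Num.real) /\
  (* (d) case 2, BKP *)
  ((L^T) = - L -> 1%:M + (L *m K - K *m L) = V *m V^T -> (C^T) = - C ->
     forall t : seq R,
       \det (expm (xit t L) *m C *m expm (- xit t L) - (K *m L + L *m K)
             + 2%:R *: (L *m xit' t L))
         \is Num.real).
Proof.
move=> T_unit T_conj T_orth _ /(tconj_fixed_of_conj T_unit) C_fixed.
move=> /(tconj_fixed_of_conj T_unit) K_fixed /(tconj_fixed_of_conj T_unit) L_fixed _.
by split; [|split; [|split]] => *; apply: (det_real_of_tconj_fixed T_unit);
  auto 10 with tconj_fixed.
Qed.
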